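(* Assume $q\equiv1\pmod 4$. Then $S^{(2)}(\beta)=0$ if and only if \[ \begin{cases} 2K(\chi)-(1-\zeta_4)K(\eta_{1/4}\chi)-(1+\zeta_4)K(\eta_{3/4}\chi)\equiv0 \pmod{8\mathcal{P}\,\mathbb{Z}[\zeta_{4k}]} & \text{if } q\equiv1\pmod 8,\\ 4+2K(\chi)+(1-\zeta_4)K(\eta_{1/4}\chi)+(1+\zeta_4)K(\eta_{3/4}\chi)\equiv0 \pmod{8\mathcal{P}\,\mathbb{Z}[\zeta_{4k}]} & \text{if } q\equiv5\pmod 8. \end{cases} \]
   Context: Let $p$ be an odd prime, $m\ge1$, $q=p^m$, $\alpha$ a primitive element of $\mathbb{F}_q$, and $T=q-1$. The binary SLCE sequence $(s_n)_{n\ge0}$ is defined as follows: $s_n=1$ if $\alpha^n+1$ is a nonzero non-square of $\mathbb{F}_q$, and $s_n=0$ otherwise. Put $S(X)=\sum_{n=0}^{T-1}s_nX^n\in\mathbb{F}_2[X]$. For an integer $t\ge0$, the $t$-th Hasse derivative is $S^{(t)}(X)=\sum_{n=t}^{T-1}\binom{n}{t}s_nX^{n-t}$, with coefficients reduced mod $2$. Let $\beta$ be an element of an algebraic closure of $\mathbb{F}_2$ with $\beta^T=1$ and multiplicative order $k>1$ (so $k$ is odd). Let $f$ be the order of $2$ modulo $k$, and write $\zeta_N=e^{2\pi i/N}$. Let $\mathcal{P}$ be a prime ideal of $\mathbb{Z}[\zeta_k]$ containing $2$. Fix a field isomorphism $\phi:\mathbb{F}_2(\beta)=\mathbb{F}_{2^f}\to\mathbb{Z}[\zeta_k]/\mathcal{P}$,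 and let $\zeta$ be the unique complex $k$-th root of unity with $\phi(\beta)=\zeta+\mathcal{P}$. Multiplicative characters of $\mathbb{F}_q$ are homomorphisms $\mathbb{F}_q^*\to\mathbb{C}^*$, extended by value $0$ at $0$. For a rational $j$ with $(q-1)j\in\mathbb{Z}$, $\eta_j$ is the character with $\eta_j(\alpha)=e^{2\pi ij}$. Let $\rho=\eta_{1/2}$ be the quadratic character. Let $\chi$ be the character with $\chi(\alpha^n)=\zeta^n$. For a character $\psi$, set $K(\psi)=\sum_{x\in\mathbb{F}_q}\rho(x)\psi(1-x)$. For an ideal $I$ of $\mathbb{Z}[\zeta_k]$, $I\,\mathbb{Z}[\zeta_{4k}]$ is the ideal it generates in $\mathbb{Z}[\zeta_{4k}]$. *)

From HB Require Import structures.
From mathcomp Require Import all_boot all_order all_algebra all_field.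
Set Implicit Arguments. Unset Strict Implicit. Unset Printing Implicit Defensive.
Import Order.TTheory GRing.Theory Num.Theory.
Local Open Scope ring_scope.

(* Z[zeta_n] as a subset of algC: integer polynomials evaluated at a
   primitive n-th root of unity (the set does not depend on the choice). *)
Definition Zring (n : nat) (x : algC) : Prop :=
  exists z : algC, n.-primitive_root z /\
    exists pz : {poly int}, x = (map_poly (fun a : int => a%:~R) pz).[z].

Definition prime_ideal_Zring (n : nat) (P : algC -> Prop) : Prop :=
  [/\ (forall x, P x -> Zring n x),
      P 0,
      (forall x y, P x -> P y -> P (x + y)),
      (forall r x, Zring n r -> P x -> P (r * x)) &
      (~ P 1 /\ forall x y, Zring n x -> Zring n y -> P (x * y) -> P x \/ P y)].

(* F_2(beta) inside a field L of characteristic 2: F_2-combinations of powers. *)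
Definition F2adj (L : finFieldType) (b : L) (x : L) : Prop :=
  exists s : seq nat, x = \sum_(i <- s) b ^+ i.

(* phi : L -> algC represents (through chosen representatives) a field
   isomorphism F_2(b) -> Z[zeta_n]/P. *)
Definition iso_mod (L : finFieldType) (b : L) (n : nat) (P : algC -> Prop)
    (phi : L -> algC) : Prop :=
  [/\ (forall x, F2adj b x -> Zring n (phi x)),
      (forall x y, F2adj b x -> F2adj b y -> P (phi (x + y) - (phi x + phi y))),
      (forall x y, F2adj b x -> F2adj b y -> P (phi (x * y) - phi x * phi y)),
      P (phi 1 - 1) &
      ((forall x y, F2adj b x -> F2adj b y -> P (phi x - phi y) -> x = y) /\
       (forall a, Zring n a -> exists2 x, F2adj b x & P (phi x - a)))].

Definition in_8P_ext (P : algC -> Prop) (n : nat) (x : algC) : Prop :=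
  exists (r : nat) (a c : 'I_r -> algC),
    (forall i, P (a i) /\ Zring n (c i)) /\ x = 8 * \sum_(i < r) a i * c i.

(* discrete logarithm to base a (in [0, #|F|-2]) *)
Definition dlog (F : finFieldType) (a x : F) : nat :=
  index x (mkseq (fun i => a ^+ i) #|F|.-1).

Definition mchar (F : finFieldType) (a : F) (w : algC) (x : F) : algC :=
  if x == 0 then 0 else w ^+ dlog a x.

Definition rho (F : finFieldType) (a : F) : F -> algC := mchar a (-1).

Definition Ksum (F : finFieldType) (a : F) (psi : F -> algC) : algC :=
  \sum_(x : F) rho a x * psi (1 - x).

Definition slce (F : finFieldType) (a : F) (n : nat) : bool :=
  (a ^+ n + 1 != 0) && ~~ [exists y : F, y ^+ 2 == a ^+ n + 1].

Definition slce_poly (F : finFieldType) (a : F) (L : finFieldType) : {poly L} :=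
  \sum_(n < #|F|.-1) (slce a n)%:R *: 'X^n.

From HB Require Import structures.
From mathcomp Require Import all_boot all_order all_algebra all_field.
From mathcomp Require Import zify ring.
Import Order.TTheory GRing.Theory Num.Theory.
Local Open Scope ring_scope.

Set Implicit Arguments. Unset Strict Implicit. Unset Printing Implicit Defensive.

(* In characteristic 2 the second Hasse derivative of X^n is 'C(n, 2) X^(n-2), and
   'C(n, 2) is odd exactly when n = 2, 3 (mod 4).  Hence S^(2)(beta) = 0 iff the sum
   of the beta^n with s_n = 1 and n = 2, 3 (mod 4) vanishes, iff (through phi) the
   corresponding sum y of the zeta^n lies in P.  The indicator of n = 2, 3 (mod 4) is
   a combination of the characters n |-> i^n, and 2 s_n = 1 - rho(alpha^n + 1) -
   [alpha^n = -1]; the substitution x = 1 + alpha^n turns the twisted sums of the s_n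
   into the sums K, so that -8y is the displayed combination, the sign i^(T/2) = +-1
   separating q = 1 and q = 5 (mod 8).  Finally 8y lies in 8 P Z[zeta_4k] iff y lies
   in P: for odd k, Z[zeta_4k] = Z[zeta_k] + i Z[zeta_k], and y = A + iB with A, B in
   P gives (y - A)^2 = -B^2 in P. *)

Definition int_horner (z : algC) (p : {poly int}) : algC :=
  (map_poly (fun a : int => a%:~R) p).[z].

Section CyclotomicIntegers.

Variable n : nat.
Hypothesis n_gt0 : (0 < n)%N.

Let zn := sval (C_prim_root_exists n_gt0).
Let zn_prim : n.-primitive_root zn := svalP (C_prim_root_exists n_gt0).

Lemma ZringP x : Zring n x <-> exists p, x = int_horner zn p.
Proof.
split=> [[z [z_prim [p ->]]] | [p ->]]; last by exists zn; split=> //; exists p.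
have [j ->] := prim_rootP zn_prim (prim_expr_order z_prim).
by exists (p \Po 'X^j); rewrite /int_horner map_comp_poly horner_comp map_polyXn hornerXn.
Qed.

Lemma ZringD x y : Zring n x -> Zring n y -> Zring n (x + y).
Proof.
move=> /ZringP[p ->] /ZringP[q ->]; apply/ZringP; exists (p + q).
by rewrite /int_horner rmorphD hornerD.
Qed.

Lemma ZringM x y : Zring n x -> Zring n y -> Zring n (x * y).
Proof.
move=> /ZringP[p ->] /ZringP[q ->]; apply/ZringP; exists (p * q).
by rewrite /int_horner rmorphM hornerM.
Qed.

Lemma Zring_int (c : int) : Zring n c%:~R.
Proof. by apply/ZringP; exists c%:P; rewrite /int_horner map_polyC hornerC. Qed.

Lemma Zring_nat (c : nat) : Zring n c%:R.
Proof. exact: Zring_int c. Qed.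

Lemma ZringN x : Zring n x -> Zring n (- x).
Proof. by move=> Zx; rewrite -mulN1r; apply: ZringM Zx; apply: (Zring_int (-1)). Qed.

Lemma ZringB x y : Zring n x -> Zring n y -> Zring n (x - y).
Proof. by move=> Zx /ZringN; apply: ZringD. Qed.

Lemma ZringX x j : Zring n x -> Zring n (x ^+ j).
Proof. by move=> Zx; elim: j => [|j IHj]; [apply: Zring_nat 1 | rewrite exprS; apply: ZringM]. Qed.

Lemma Zring_sum (I : Type) (r : seq I) (Q : pred I) (F : I -> algC) :
  (forall i, Q i -> Zring n (F i)) -> Zring n (\sum_(i <- r | Q i) F i).
Proof. by move=> ZF; elim/big_rec: _ => [|i x Qi]; [apply: Zring_nat 0 | apply/ZringD/ZF]. Qed.

Lemma Zring_unity x : x ^+ n = 1 -> Zring n x.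
Proof.
move=> xn; have [j ->] := prim_rootP zn_prim xn.
by apply/ZringP; exists 'X^j; rewrite /int_horner map_polyXn hornerXn.
Qed.

End CyclotomicIntegers.

Section PrimeIdeal.

Variables (k : nat) (P : algC -> Prop).
Hypotheses (k_gt0 : (0 < k)%N) (P_prime : prime_ideal_Zring k P).

Lemma ideal_Zring x : P x -> Zring k x.
Proof. by case: P_prime => sub_P *; apply: sub_P. Qed.

Lemma ideal0 : P 0.
Proof. by case: P_prime. Qed.

Lemma idealD x y : P x -> P y -> P (x + y).
Proof. by case: P_prime => _ _ addP *; apply: addP. Qed.

Lemma idealMl r x : Zring k r -> P x -> P (r * x).
Proof. by case: P_prime => _ _ _ mulP *; apply: mulP. Qed.

Lemma idealN x : P x -> P (- x).
Proof. by move=> Px; rewrite -mulN1r; apply: idealMl Px; apply: (Zring_int _ (-1)). Qed.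

Lemma idealNE x : P (- x) <-> P x.
Proof. by split=> [/idealN | /idealN //]; rewrite opprK. Qed.

Lemma idealB x y : P x -> P y -> P (x - y).
Proof. by move=> Px /idealN; apply: idealD. Qed.

Lemma ideal_sqr x : Zring k x -> P (x * x) -> P x.
Proof. by case: P_prime => _ _ _ _ [_ primeP] Zx /primeP[]. Qed.

Lemma modP_trans x y z : P (x - y) -> P (y - z) -> P (x - z).
Proof. by move=> Pxy /(idealD Pxy); rewrite addrA subrK. Qed.

Lemma modP_sym x y : P (x - y) -> P (y - x).
Proof. by move=> /idealN; rewrite opprB. Qed.

Lemma modPD x y x' y' : P (x - x') -> P (y - y') -> P (x + y - (x' + y')).
Proof. by move=> Px Py; rewrite opprD addrACA; apply: idealD. Qed.

Lemma modPM x y x' y' : Zring k x -> Zring k y' ->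
  P (x - x') -> P (y - y') -> P (x * y - x' * y').
Proof.
move=> Zx Zy' Px Py.
have -> : x * y - x' * y' = x * (y - y') + y' * (x - x') by ring.
by apply: idealD; apply: idealMl.
Qed.

End PrimeIdeal.

Lemma prim4_i : 4.-primitive_root ('i : algC).
Proof.
have Ni1 : (-1 : algC) != 1 by rewrite lt_eqF // (lt_trans (ltrN10 _) ltr01).
apply/andP; split=> //; apply/forallP=> -[[|[|[|[|j]]]] //= _]; rewrite unity_rootE.
- rewrite expr1 eqbF_neg; apply: contraNneq Ni1 => i1.
  by rewrite -sqrCi i1 expr1n.
- by rewrite sqrCi (negPf Ni1).
- rewrite exprSr sqrCi mulN1r eqbF_neg eqr_oppLR; apply: contraNneq Ni1 => i1.
  by rewrite -sqrCi i1 sqrrN expr1n.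
- by rewrite -[4%N]/(2 * 2)%N exprM sqrCi sqrrN expr1n !eqxx.
Qed.

(* Z[zeta_k] + i Z[zeta_k], which is Z[zeta_4k] when k is odd. *)
Definition Zring_i (k : nat) (x : algC) : Prop :=
  exists c1 c2, [/\ Zring k c1, Zring k c2 & x = c1 + 'i * c2].

Section GaussianDecomposition.

Variable k : nat.
Hypothesis k_odd : odd k.

Let k_gt0 : (0 < k)%N := odd_gt0 k_odd.

Lemma Zring_i_Zring x : Zring k x -> Zring_i k x.
Proof. by exists x, 0; rewrite mulr0 addr0; split=> //; apply: (Zring_nat k_gt0 0). Qed.

Lemma Zring_iD x y : Zring_i k x -> Zring_i k y -> Zring_i k (x + y).
Proof.
move=> [a [b [Za Zb ->]]] [c [d [Zc Zd ->]]].
by exists (a + c), (b + d); split; [apply: (ZringD k_gt0).. | ring].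
Qed.

Lemma Zring_iM x y : Zring_i k x -> Zring_i k y -> Zring_i k (x * y).
Proof.
move=> [a [b [Za Zb ->]]] [c [d [Zc Zd ->]]].
exists (a * c - b * d), (a * d + b * c); split.
- by apply: (ZringB k_gt0); apply: ZringM.
- by apply: (ZringD k_gt0); apply: ZringM.
have -> : (a + 'i * b) * (c + 'i * d) = a * c + 'i ^+ 2 * b * d + 'i * (a * d + b * c) by ring.
by rewrite sqrCi; ring.
Qed.

Lemma Zring_iX x j : Zring_i k x -> Zring_i k (x ^+ j).
Proof.
move=> Zx; elim: j => [|j IHj]; last by rewrite exprS; apply: Zring_iM.
by rewrite expr0; apply/Zring_i_Zring/(Zring_nat k_gt0 1).
Qed.

(* With k = 2m + 1 we have k^2 + 4 (3m(m+1) + 1) = 1 + 4k^2, so that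
   x = (x^k)^k (x^4)^(3m(m+1)+1), where x^k is a power of i and x^4 is a
   k-th root of unity. *)
Lemma Zring_i_unity x : x ^+ (4 * k) = 1 -> Zring_i k x.
Proof.
move=> x4k.
have xk4 : (x ^+ k) ^+ 4 = 1 by rewrite -exprM mulnC.
have [j xk] := prim_rootP prim4_i xk4.
have Zi : Zring_i k 'i.
  exists 0, 1; rewrite mulr1 add0r.
  by split; [apply: (Zring_nat k_gt0 0) | apply: (Zring_nat k_gt0 1) |].
have Zx4 : Zring k (x ^+ 4) by apply: (Zring_unity k_gt0); rewrite -exprM x4k.
have [m km] : exists m, k = (2 * m + 1)%N.
  by exists k./2; rewrite -{1}(odd_double_half k) k_odd addnC -muln2 mulnC.
have -> : x = (x ^+ k) ^+ k * (x ^+ 4) ^+ (3 * m * m.+1 + 1).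
  rewrite -!exprM -exprD (_ : (k * k + 4 * _ = 1 + 4 * k * k)%N); last by rewrite km; nia.
  by rewrite exprD exprM x4k expr1n mulr1 expr1.
by apply: Zring_iM; apply: Zring_iX; rewrite ?xk; [apply: Zring_iX | apply: Zring_i_Zring].
Qed.

Lemma Zring_i_cyclotomic x : Zring (4 * k) x -> Zring_i k x.
Proof.
case=> w [w_prim [p ->]]; have w4k := prim_expr_order w_prim.
elim/poly_ind: p => [|p c IHp].
  by rewrite rmorph0 horner0; apply/Zring_i_Zring/(Zring_nat k_gt0 0).
rewrite rmorphD rmorphM /= map_polyX map_polyC hornerD hornerMX hornerC /=.
apply: Zring_iD; last exact/Zring_i_Zring/(Zring_int k_gt0).
by apply: Zring_iM => //; apply: Zring_i_unity.
Qed.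

Variable P : algC -> Prop.
Hypothesis P_prime : prime_ideal_Zring k P.

Lemma in_8P_ext8 y : Zring k y -> in_8P_ext P (4 * k) (8 * y) <-> P y.
Proof.
move=> Zy; split=> [[r [a [c [Pac y_sum]]]] | Py]; last first.
  exists 1%N, (fun=> y), (fun=> 1); rewrite big_ord1 mulr1; split=> // _.
  by split=> //; apply: (Zring_nat _ 1); rewrite muln_gt0 k_gt0.
have {}y_sum : y = \sum_(i < r) a i * c i.
  by apply: (mulfI (_ : 8 != 0)); rewrite ?pnatr_eq0.
have [A [B [PA PB AB]]] : exists A B, [/\ P A, P B & y = A + 'i * B].
  rewrite {}y_sum; apply: (big_ind (fun x => exists A B, [/\ P A, P B & x = A + 'i * B])).
  - by exists 0, 0; rewrite mulr0 addr0; split=> //; apply: ideal0 P_prime.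
  - move=> _ _ [A1 [B1 [PA1 PB1 ->]]] [A2 [B2 [PA2 PB2 ->]]].
    by exists (A1 + A2), (B1 + B2); split; [apply: (idealD P_prime).. | ring].
  move=> i _; have [Pa Zc] := Pac i; have [c1 [c2 [Zc1 Zc2 ->]]] := Zring_i_cyclotomic Zc.
  by exists (c1 * a i), (c2 * a i); split; [apply: (idealMl P_prime).. | ring].
have PyA : P ((y - A) * (y - A)).
  have -> : (y - A) * (y - A) = - B * B.
    by rewrite AB addrAC subrr add0r -expr2 exprMn sqrCi mulN1r mulNr expr2.
  exact/(idealMl P_prime _ PB)/(ZringN k_gt0)/(ideal_Zring P_prime PB).
have := idealD P_prime (ideal_sqr P_prime (ZringB k_gt0 Zy (ideal_Zring P_prime PA)) PyA) PA.
by rewrite subrK.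
Qed.

End GaussianDecomposition.

Lemma F2adj_sum (L : finFieldType) (b : L) (I : Type) (r : seq I) (Q : pred I)
    (e : I -> nat) :
  F2adj b (\sum_(i <- r | Q i) b ^+ e i).
Proof. by exists [seq e i | i <- r & Q i]; rewrite big_map big_filter. Qed.

Lemma F2adjX (L : finFieldType) (b : L) j : F2adj b (b ^+ j).
Proof. by exists [:: j]; rewrite big_seq1. Qed.

Section Transfer.

Variables (L : finFieldType) (b : L) (k : nat) (P : algC -> Prop).
Variables (phi : L -> algC) (zeta : algC).
Hypotheses (k_gt0 : (0 < k)%N) (P_prime : prime_ideal_Zring k P).
Hypotheses (phi_iso : iso_mod b k P phi) (zeta_k : zeta ^+ k = 1).
Hypothesis phi_b : P (phi b - zeta).

Lemma iso_mod0 : P (phi 0).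
Proof.
have [_ phiD _ _ _] := phi_iso; have F0 : F2adj b 0 by exists [::]; rewrite big_nil.
have := phiD _ _ F0 F0; rewrite addr0 opprD addrA subrr add0r.
by move=> /(idealN k_gt0 P_prime); rewrite opprK.
Qed.

Lemma iso_modX j : P (phi (b ^+ j) - zeta ^+ j).
Proof.
have [phiZ _ phiM phi1 _] := phi_iso.
elim: j => [|j IHj]; first by rewrite !expr0.
rewrite !exprSr; have := phiM _ _ (F2adjX b j) (F2adjX b 1); rewrite expr1 => phiMb.
apply: (modP_trans P_prime phiMb).
exact: (modPM P_prime (phiZ _ (F2adjX b j)) (Zring_unity k_gt0 zeta_k) IHj phi_b).
Qed.

Lemma iso_mod_sum (I : Type) (r : seq I) (Q : pred I) (e : I -> nat) :
  P (phi (\sum_(i <- r | Q i) b ^+ e i) - \sum_(i <- r | Q i) zeta ^+ e i).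
Proof.
have [_ phiD _ _ _] := phi_iso.
elim: r => [|i r IHr]; first by rewrite !big_nil subr0; apply: iso_mod0.
rewrite !big_cons; case: (Q i) => //.
apply: (modP_trans P_prime (phiD _ _ (F2adjX b _) (F2adj_sum b r Q e))).
exact: (modPD P_prime (iso_modX _) IHr).
Qed.

Lemma iso_mod_sum_eq0 (I : Type) (r : seq I) (Q : pred I) (e : I -> nat) :
  \sum_(i <- r | Q i) b ^+ e i = 0 <-> P (\sum_(i <- r | Q i) zeta ^+ e i).
Proof.
have [_ _ _ _ [phi_inj _]] := phi_iso.
have phi_sum := iso_mod_sum r Q e; split=> [sum0 | Psum].
  have := idealB k_gt0 P_prime iso_mod0 phi_sum.
  by rewrite sum0 opprB addrC subrK.
apply: phi_inj; [exact: F2adj_sum | by exists [::]; rewrite big_nil |].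
by apply: (idealB k_gt0 P_prime _ iso_mod0); have := idealD P_prime phi_sum Psum; rewrite subrK.
Qed.

Lemma iso_mod_neq1 : b != 1 -> zeta != 1.
Proof.
have [_ _ _ phi1 [phi_inj _]] := phi_iso.
apply: contraNneq => zeta1; apply/eqP; rewrite -(expr1 b) -(expr0 b).
apply: phi_inj; rewrite ?expr0 ?expr1; [exact: (F2adjX b 1) | exact: (F2adjX b 0) |].
by apply: (modP_trans P_prime phi_b); rewrite zeta1; apply: (modP_sym k_gt0 P_prime).
Qed.

End Transfer.

Lemma odd_bin2 n : odd 'C(n, 2) = (2 <= n %% 4)%N.
Proof.
elim: n => [|n IHn] //; rewrite binS bin1 oddD IHn -(@odd_mod n 4) //.
rewrite -[n.+1]addn1 -modnDml; have := ltn_pmod n (isT : (0 < 4)%N).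
by case: (n %% 4)%N => [|[|[|[|]]]].
Qed.

Lemma nderiv2_char2_eq0 (L : fieldType) (b : L) (N : nat) (c : nat -> bool) :
  2 \in [pchar L] -> b != 0 ->
  ((\sum_(n < N) (c n)%:R *: 'X^n)^`N(2)).[b] = 0 <->
  \sum_(n < N | c n && (2 <= n %% 4)%N) b ^+ n = 0.
Proof.
move=> L_char2 b_neq0.
have b2_neq0 : b ^+ 2 != 0 by rewrite expf_neq0.
rewrite linear_sum horner_sum [X in _ <-> X = 0]big_mkcond /=.
rewrite (eq_bigr (fun n : 'I_N => (b ^+ 2)^-1 * (if c n && (2 <= n %% 4)%N then b ^+ n else 0))).
  rewrite -mulr_sumr; split=> [/eqP | ->]; rewrite ?mulr0 //.
  by rewrite mulf_eq0 invr_eq0 (negPf b2_neq0) => /eqP.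
move=> n _; rewrite nderivnZ nderivnXn hornerZ hornerMn hornerXn.
case: (c n); rewrite /= ?mul0r ?mulr0 // mul1r.
rewrite -mulr_natr -(GRing.natr_mod_pchar L_char2) modn2 odd_bin2.
case: (leqP 2 (n %% 4)) => [n_mod4 | _] /=; last by rewrite !mulr0.
have n_ge2 : (2 <= n)%N := leq_trans n_mod4 (leq_mod n 4).
by rewrite mulr1 -{2}(subnKC n_ge2) exprD mulKf.
Qed.

Lemma sum_unity_root_eq0 (R : idomainType) (v : R) N :
  v != 1 -> v ^+ N = 1 -> \sum_(n < N) v ^+ n = 0.
Proof.
move=> v_neq1 vN; have /esym/eqP := subrX1 v N; rewrite vN subrr.
by rewrite mulf_eq0 subr_eq0 (negPf v_neq1) => /eqP.
Qed.

Section SLCE.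

Variables (F : finFieldType) (a : F).
Local Notation T := #|F|.-1.
Hypothesis a_prim : T.-primitive_root a.

Let T_gt0 : (0 < T)%N := prim_order_gt0 a_prim.

Lemma dlogX n : dlog a (a ^+ n) = (n %% T)%N.
Proof.
rewrite /dlog -(prim_expr_mod a_prim) -[a ^+ _](nth_mkseq 0 (fun i => a ^+ i) (ltn_pmod n T_gt0)).
apply: index_uniq; first by rewrite size_mkseq ltn_mod.
rewrite map_inj_in_uniq ?iota_uniq // => i j; rewrite !mem_iota !add0n => iT jT.
by move/eqP; rewrite (eq_prim_root_expr a_prim) !modn_small // => /eqP.
Qed.

Lemma mcharX w n : w ^+ T = 1 -> mchar a w (a ^+ n) = w ^+ n.
Proof.
move=> wT; rewrite /mchar expf_eq0 (prim_root_eq0 a_prim) (gtn_eqF T_gt0) andbF /=.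
by rewrite dlogX expr_mod.
Qed.

Lemma neq0_prim_expr x : x != 0 -> exists j, x = a ^+ j.
Proof.
move=> x_neq0; have /(prim_rootP a_prim)[j ->] : x ^+ T = 1; last by exists j.
apply: (mulIf x_neq0); rewrite mul1r -exprSr prednK ?expf_card //.
by apply/card_gt0P; exists 0.
Qed.

Lemma sum_field_prim (h : F -> algC) :
  \sum_x h x = h 0 + \sum_(i < T) h (a ^+ i).
Proof.
have expr_inj : injective (fun i : 'I_T => a ^+ i).
  by move=> i j /eqP; rewrite (eq_prim_root_expr a_prim) !modn_small // => /eqP/val_inj.
have units : [set a ^+ i | i : 'I_T] = [set~ 0].
  apply/eqP; rewrite eq_sym eqEcard cardsC1 card_imset // ?cardsT card_ord leqnn andbT.
  apply/subsetP => x; rewrite in_setC1 => /neq0_prim_expr[j ->].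
  by apply/imsetP; exists (Ordinal (ltn_pmod j T_gt0)); rewrite ?prim_expr_mod.
rewrite (bigD1 0) //= -(big_imset _ (in2W expr_inj)) /= units.
by congr (_ + _); apply: eq_bigl => x; rewrite in_setC1.
Qed.

Hypothesis T_even : (2 %| T)%N.

Let T_odd : odd T = false.
Proof. by apply/negbTE; rewrite -dvdn2. Qed.

Let half_double : (T./2 * 2 = T)%N.
Proof. by rewrite muln2 -[RHS](odd_double_half T) T_odd. Qed.

Lemma prim_expr_half : a ^+ T./2 = -1.
Proof.
have : (a ^+ T./2) ^+ 2 == 1 by rewrite -exprM half_double prim_expr_order.
rewrite sqrf_eq1 => /orP[|/eqP //]; rewrite -(prim_order_dvd a_prim) => /dvdn_leq.
by lia.
Qed.

Lemma is_square_expr j : [exists y, y ^+ 2 == a ^+ j] = ~~ odd j.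
Proof.
apply/existsP/idP => [[y /eqP y2] | j_even]; last first.
  by exists (a ^+ j./2); rewrite -exprM muln2 -{2}(odd_double_half j) (negPf j_even).
have /neq0_prim_expr[i y_eq] : y != 0.
  apply: contra_eqN y2 => /eqP ->; rewrite expr0n /= eq_sym expf_eq0.
  by rewrite (prim_root_eq0 a_prim) (gtn_eqF T_gt0) andbF.
move/eqP: y2; rewrite y_eq -exprM (eq_prim_root_expr a_prim) => /eqP ij.
by rewrite -(odd_mod j T_odd) -ij (odd_mod _ T_odd) oddM andbF.
Qed.

Lemma rhoX j : rho a (a ^+ j) = (-1) ^+ j.
Proof. by rewrite /rho mcharX // -signr_odd T_odd expr0. Qed.

Lemma slce_rhoE n :
  2 * (slce a n)%:R = 1 - rho a (a ^+ n + 1) - (a ^+ n + 1 == 0)%:R.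
Proof.
rewrite /slce; have [-> | /neq0_prim_expr[j ->]] := eqVneq (a ^+ n + 1) 0.
  by rewrite /rho /mchar eqxx /= mulr0 !subr0 subrr.
rewrite is_square_expr rhoX negbK /= subr0 -signr_odd.
by case: (odd j); rewrite /= ?expr1 ?expr0; ring.
Qed.

(* The substitution x = 1 + a^n, together with 1 - x = a^(n + T/2). *)
Lemma sum_rho_shift (g : F -> algC) v :
  g 0 = 0 -> (forall n, g (a ^+ n) = v ^+ n) -> v ^+ T = 1 ->
  \sum_(n < T) v ^+ n * rho a (a ^+ n + 1) = v ^+ T./2 * Ksum a g.
Proof.
move=> g0 gX vT; rewrite /Ksum (reindex_inj (addrI 1)) /= sum_field_prim.
rewrite addr0 subrr g0 mulr0 add0r mulr_sumr; apply: eq_bigr => i _.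
rewrite opprD addNKr -mulN1r -prim_expr_half -exprD gX exprD (addrC 1).
have -> : v ^+ T./2 * (rho a (a ^+ i + 1) * (v ^+ T./2 * v ^+ i)) =
    v ^+ (T./2 * 2) * (v ^+ i * rho a (a ^+ i + 1)) by rewrite exprM; ring.
by rewrite half_double vT mul1r.
Qed.

Lemma sum_expr_eqN1 (v : algC) :
  \sum_(n < T) v ^+ n * (a ^+ n + 1 == 0)%:R = v ^+ T./2.
Proof.
have half_lt : (T./2 < T)%N by rewrite -[X in (_ < X)%N]half_double; lia.
rewrite (bigD1 (Ordinal half_lt)) //= addr_eq0 -prim_expr_half eqxx mulr1 big1 ?addr0 //.
move=> i i_neq; rewrite addr_eq0 -prim_expr_half (eq_prim_root_expr a_prim).
by rewrite !modn_small // (_ : (nat_of_ord i == T./2) = false) ?mulr0 //; apply: negPf i_neq.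
Qed.

Lemma two_slce_sum_Ksum (g : F -> algC) v :
  g 0 = 0 -> (forall n, g (a ^+ n) = v ^+ n) -> v ^+ T = 1 -> v != 1 ->
  2 * \sum_(n < T) (slce a n)%:R * v ^+ n = - (v ^+ T./2 * (Ksum a g + 1)).
Proof.
move=> g0 gX vT v_neq1; rewrite mulr_sumr.
under eq_bigr do rewrite mulrA mulrC slce_rhoE !mulrBr mulr1.
by rewrite !sumrB sum_unity_root_eq0 // (sum_rho_shift g0 gX vT) sum_expr_eqN1; ring.
Qed.

End SLCE.

(* Each case is a polynomial identity in 'i modulo 1 + 'i^2. *)
Lemma mod4_ge2_indicator n :
  4 * (2 <= n %% 4)%N%:R = 2 + ('i - 1) * 'i ^+ n - (1 + 'i) * ('i ^+ 3) ^+ n :> algC.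
Proof.
have i3 : 'i ^+ 3 = - 'i :> algC by rewrite exprSr sqrCi mulN1r.
rewrite exprAC -(expr_mod n (prim_expr_order prim4_i)).
have : (n %% 4 < 4)%N by rewrite ltn_mod.
case: (n %% 4)%N => [|[|[|[|//]]]] _; rewrite [LHS]/=.
- by rewrite expr0 expr1n; ring.
- rewrite (_ : _ - _ = (1 + 'i ^+ 2) * (2 - 'i - 'i ^+ 2)); last by ring.
  by rewrite sqrCi addrN !mul0r mulr0.
- by rewrite sqrCi; ring.
- rewrite i3 (_ : _ - _ = 4 + (1 + 'i ^+ 2) * ('i ^+ 2 + 'i - 2)); last by ring.
  by rewrite sqrCi addrN mul0r addr0 mulr1.
Qed.

Lemma sum_mod4_ge2 N (c : nat -> bool) (z : algC) :
  4 * \sum_(n < N | c n && (2 <= n %% 4)%N) z ^+ n =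
  2 * \sum_(n < N) (c n)%:R * z ^+ n
  + ('i - 1) * \sum_(n < N) (c n)%:R * ('i * z) ^+ n
  - (1 + 'i) * \sum_(n < N) (c n)%:R * ('i ^+ 3 * z) ^+ n.
Proof.
rewrite big_mkcond !mulr_sumr -big_split -sumrB; apply: eq_bigr => n _ /=.
rewrite (exprMn n 'i z) (exprMn n ('i ^+ 3) z).
rewrite [RHS](_ : _ = (c n)%:R * (2 + ('i - 1) * 'i ^+ n
   - (1 + 'i) * ('i ^+ 3) ^+ n) * z ^+ n); last by ring.
by rewrite -mod4_ge2_indicator; case: (c n); case: (2 <= n %% 4)%N => /=; ring.
Qed.

Lemma slce_mod4_Ksum (F : finFieldType) (a : F) (zeta : algC) :
  (#|F|.-1).-primitive_root a -> (4 %| #|F|.-1)%N -> zeta ^+ (#|F|.-1)./2 = 1 ->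
  zeta != 1 -> 'i * zeta != 1 -> 'i ^+ 3 * zeta != 1 ->
  2 * Ksum a (mchar a zeta)
  - 'i ^+ (#|F|.-1)./2 * (1 - 'i) * Ksum a (fun x => mchar a 'i x * mchar a zeta x)
  - 'i ^+ (#|F|.-1)./2 * (1 + 'i) * Ksum a (fun x => mchar a ('i ^+ 3) x * mchar a zeta x)
  + 2 - 2 * 'i ^+ (#|F|.-1)./2
  = 8 * - \sum_(n < #|F|.-1 | slce a n && (2 <= n %% 4)%N) zeta ^+ n.
Proof.
set T := #|F|.-1; set s := 'i ^+ T./2 => a_prim T_div4 zeta_half z_neq1 iz_neq1 i3z_neq1.
have T_even : (2 %| T)%N := dvdn_trans (isT : (2 %| 4)%N) T_div4.
have half_double : (T./2 * 2 = T)%N.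
  by rewrite muln2 -[RHS](odd_double_half T); move: T_even; rewrite dvdn2 => /negPf ->.
have zetaT : zeta ^+ T = 1 by rewrite -half_double exprM zeta_half expr1n.
have iT : 'i ^+ T = 1 :> algC.
  by rewrite -(divnK T_div4) mulnC exprM (prim_expr_order prim4_i) expr1n.
have s3 : s ^+ 3 = s by rewrite exprS -exprM half_double iT mulr1.
have mchar0 w : mchar a w 0 = 0 by rewrite /mchar eqxx.
have Kw w : w ^+ T = 1 -> w * zeta != 1 ->
    2 * \sum_(n < T) (slce a n)%:R * (w * zeta) ^+ n =
    - ((w * zeta) ^+ T./2 * (Ksum a (fun x => mchar a w x * mchar a zeta x) + 1)).
  move=> wT; apply: two_slce_sum_Ksum => //; first by rewrite mchar0 mul0r.
    by move=> n; rewrite !mcharX // exprMn.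
  by rewrite exprMn wT zetaT mulr1.
have K0 := two_slce_sum_Ksum a_prim T_even (mchar0 zeta)
  (fun n => mcharX a_prim n zetaT) zetaT z_neq1.
have K1 := Kw _ iT iz_neq1.
have iT3 : ('i ^+ 3) ^+ T = 1 :> algC by rewrite exprAC iT expr1n.
have K3 := Kw _ iT3 i3z_neq1.
rewrite zeta_half mul1r in K0; rewrite exprMn zeta_half mulr1 -/s in K1.
rewrite exprMn zeta_half mulr1 (exprAC 'i 3) -/s s3 in K3.
have E := sum_mod4_ge2 T (slce a) zeta.
set y := \sum_(n < T | _) _ in E *.
set C0 := \sum_(n < T) _ * zeta ^+ n in K0 E.
set C1 := \sum_(n < T) _ * ('i * zeta) ^+ n in K1 E.
set C3 := \sum_(n < T) _ * ('i ^+ 3 * zeta) ^+ n in K3 E.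
have -> : 8 * - y = - (2 * (2 * C0) + ('i - 1) * (2 * C1) - (1 + 'i) * (2 * C3)).
  have -> : 8 * - y = -2 * (4 * y) by ring.
  by rewrite E; ring.
by rewrite K0 K1 K3; ring.
Qed.

Lemma prim_root_char2_odd (L : fieldType) (b : L) k :
  2 \in [pchar L] -> k.-primitive_root b -> odd k.
Proof.
move=> L_char2 b_prim; apply: contraT => k_even.
have half_double : (k./2 * 2 = k)%N by rewrite muln2 -[RHS](odd_double_half k) (negPf k_even).
have half_gt0 : (0 < k./2)%N by have := prim_order_gt0 b_prim; lia.
have : (b ^+ k./2) ^+ 2 == 1 by rewrite -exprM half_double prim_expr_order.
rewrite sqrf_eq1 (oppr_pchar2 L_char2) orbb -(prim_order_dvd b_prim).
by move=> /(dvdn_leq half_gt0); lia.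
Qed.

Lemma i_expr_mul_unity_neq1 k j (z : algC) :
  odd k -> odd j -> z ^+ k = 1 -> 'i ^+ j * z != 1.
Proof.
move=> k_odd j_odd zk; apply/eqP => ijz.
have ijk : 'i ^+ (j * k)%N = 1 :> algC by rewrite exprM -[_ ^+ k]mulr1 -zk -exprMn ijz expr1n.
have := congr1 (fun x => x ^+ 2) ijk.
rewrite /= exprAC sqrCi -signr_odd oddM j_odd k_odd expr1 expr1n => /eqP.
by rewrite lt_eqF // (lt_trans (ltrN10 _) ltr01).
Qed.

Lemma unity_expr_half k T (z : algC) :
  odd k -> z ^+ k = 1 -> (k %| T)%N -> ~~ odd T -> z ^+ T./2 = 1.
Proof.
move=> k_odd zk k_dvd_T T_even.
have half_double : (T./2 * 2 = T)%N.
  by rewrite muln2 -[RHS](odd_double_half T) (negPf T_even).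
have : (k %| T./2)%N by rewrite -(@Gauss_dvdl k _ 2) ?coprimen2 // half_double.
by move/divnK <-; rewrite mulnC exprM zk expr1n.
Qed.

Theorem mainTheorem4 (p m : nat) (F : finFieldType) (alpha : F)
    (L : finFieldType) (beta : L) (k : nat)
    (P : algC -> Prop) (phi : L -> algC) (zeta : algC) :
  prime p -> odd p -> (0 < m)%N -> #|F| = (p ^ m)%N ->
  (#|F|.-1).-primitive_root alpha ->
  (2 \in [pchar L])%N -> beta ^+ #|F|.-1 = 1 ->
  k.-primitive_root beta -> (1 < k)%N ->
  prime_ideal_Zring k P -> P 2 ->
  iso_mod beta k P phi ->
  zeta ^+ k = 1 -> P (phi beta - zeta) ->
  #|F| = 1 %[mod 4] ->
  let chi := mchar alpha zeta in
  let eta14chi := fun x => mchar alpha 'i x * chi x in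
  let eta34chi := fun x => mchar alpha ('i ^+ 3) x * chi x in
  let S2beta := ((slce_poly alpha L)^`N(2)).[beta] in
  (#|F| = 1 %[mod 8] ->
     (S2beta = 0 <->
      in_8P_ext P (4 * k)
        (2 * Ksum alpha chi - (1 - 'i) * Ksum alpha eta14chi
                            - (1 + 'i) * Ksum alpha eta34chi))) /\
  (#|F| = 5 %[mod 8] ->
     (S2beta = 0 <->
      in_8P_ext P (4 * k)
        (4 + 2 * Ksum alpha chi + (1 - 'i) * Ksum alpha eta14chi
                                + (1 + 'i) * Ksum alpha eta34chi))).
Proof.
move=> _ _ _ _ a_prim L_char2 bT b_prim k_gt1 P_prime _ phi_iso zeta_k phi_b q_mod4.
move=> chi eta14chi eta34chi S2beta.
have k_gt0 : (0 < k)%N by lia.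
have T_div4 : (4 %| #|F|.-1)%N by lia.
have k_odd := prim_root_char2_odd L_char2 b_prim.
have zeta_half : zeta ^+ (#|F|.-1)./2 = 1.
  by apply: unity_expr_half k_odd zeta_k _ _; [rewrite (prim_order_dvd b_prim) bT | lia].
have b_neq1 : beta != 1.
  by apply: contraTneq k_gt1 => b1; rewrite -leqNgt dvdn_leq // (prim_order_dvd b_prim) b1 expr1.
have iz_neq1 j : odd j -> 'i ^+ j * zeta != 1.
  by move=> j_odd; apply: i_expr_mul_unity_neq1 k_odd j_odd zeta_k.
have := slce_mod4_Ksum a_prim T_div4 zeta_half
  (iso_mod_neq1 k_gt0 P_prime phi_iso phi_b b_neq1) (iz_neq1 1%N isT) (iz_neq1 3%N isT).
rewrite -(expr_mod (#|F|.-1)./2 (prim_expr_order prim4_i)).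
set y := \sum_(n < _ | _) _ => Ky.
have S2_y : S2beta = 0 <-> P y.
  rewrite /S2beta /slce_poly nderiv2_char2_eq0 //; last by rewrite (prim_root_eq0 b_prim) -lt0n.
  exact: (iso_mod_sum_eq0 k_gt0 P_prime phi_iso zeta_k phi_b).
have Zy : Zring k y by apply: (Zring_sum k_gt0) => n _; apply/(ZringX k_gt0)/(Zring_unity k_gt0).
have S2_iff X : X = 8 * - y -> S2beta = 0 <-> in_8P_ext P (4 * k) X.
  move=> ->; apply: iff_trans S2_y (iff_sym _).
  exact: iff_trans (in_8P_ext8 k_odd P_prime (ZringN k_gt0 Zy)) (idealNE k_gt0 P_prime y).
split=> q_mod8; apply: S2_iff; rewrite -Ky.
- by rewrite (_ : ((#|F|.-1)./2 %% 4 = 0)%N) ?expr0; [ring | lia].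
- by rewrite (_ : ((#|F|.-1)./2 %% 4 = 2)%N) ?sqrCi; [ring | lia].
Qed.
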